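(* If $G$ is an infinite $2$-edge-connected graph, then $G$ is cat-win.
   Context: Cat Herding is played on a simple, possibly infinite graph $G$. The cat first places its token on a vertex. Then the players alternate, the herder moving first: the herder deletes one edge of the current graph, and then, unless the cat's current vertex has degree $0$ in the current graph, the cat moves its token along a finite path with at least one edge in the current graph to a different vertex. The cat is captured when its vertex has degree $0$ in the current graph. $G$ is cat-win if the cat has a strategy that is never captured, and herder-win if the herder has a strategy that eventually captures the cat. A graph is $2$-edge-connected if every pair of vertices is joined by at least $2$ edge-disjoint finite paths (equivalently, it is connected and has no disconnecting set of fewer than $2$ edges). *)

From Stdlib Require Import List Relations.
Import ListNotations.
Set Implicit Arguments.

Definition simple_graph (V : Type) (adj : V -> V -> Prop) : Prop :=
  (forall u v, adj u v -> adj v u) /\ (forall v, ~ adj v v).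

Definition infinite_type (V : Type) : Prop :=
  ~ exists l : list V, forall x : V, In x l.

Definition del_adj (V : Type) (adj : V -> V -> Prop) (D : list (V * V))
  (u v : V) : Prop :=
  adj u v /\ ~ In (u, v) D /\ ~ In (v, u) D.

Definition reach (V : Type) (adj : V -> V -> Prop) (v w : V) : Prop :=
  clos_refl_trans V adj v w.

Definition connected (V : Type) (adj : V -> V -> Prop) : Prop :=
  forall u v : V, reach adj u v.

(* 2-edge-connected: connected and no disconnecting set of fewer than 2
   edges, i.e. deleting any single edge leaves the graph connected. *)
Definition two_edge_connected (V : Type) (adj : V -> V -> Prop) : Prop :=
  connected adj /\
  forall a b : V, adj a b -> connected (del_adj adj [(a, b)]).

Definition isolated (V : Type) (adj : V -> V -> Prop) (v : V) : Prop :=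
  forall w : V, ~ adj v w.

(* A cat strategy: an initial vertex, and a reply to each nonempty
   history of herder deletions (the cat's own moves are determined by
   its strategy, so the deletion history is the full history). *)
Record cat_strategy (V : Type) := {
  cat_start : V;
  cat_move : list (V * V) -> V }.

(* cat position after the herder deletions D (in chronological order) *)
Definition cat_pos (V : Type) (s : cat_strategy V) (D : list (V * V)) : V :=
  match D with
  | [] => cat_start s
  | _ => cat_move s D
  end.

Inductive legal_history (V : Type) (adj : V -> V -> Prop)
  : list (V * V) -> Prop :=
| lh_nil : legal_history adj []
| lh_snoc : forall D a b, legal_history adj D -> del_adj adj D a b ->
    legal_history adj (D ++ [(a, b)]).

Definition cat_winning_strategy (V : Type) (adj : V -> V -> Prop)
  (s : cat_strategy V) : Prop :=
  ~ isolated adj (cat_start s) /\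
  forall D a b, legal_history adj D -> del_adj adj D a b ->
    let D' := D ++ [(a, b)] in
    ~ isolated (del_adj adj D') (cat_pos s D) /\
    cat_pos s D' <> cat_pos s D /\
    clos_trans V (del_adj adj D') (cat_pos s D) (cat_pos s D').

Definition cat_win (V : Type) (adj : V -> V -> Prop) : Prop :=
  exists s : cat_strategy V, cat_winning_strategy adj s.

From Stdlib Require Import List Relations.
From Stdlib Require Import Classical ClassicalEpsilon FunctionalExtensionality
  PropExtensionality.
Import ListNotations.

(* Call a vertex robust in the current graph if, whatever edge the herder
   deletes next, its component stays infinite.  In a graph with finitely many
   bridges only finitely many vertices of infinite components fail to be
   robust: deleting a bridge e can leave a vertex in a finite component only
   if that component contains an endpoint of e.  Every deletion keeps the
   number of bridges finite, since a new bridge must lie on a fixed path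
   joining the endpoints of the deleted edge, and initially there are none.
   As the connected graph is infinite, a robust start exists, and from a
   robust vertex the cat can always run, inside its (infinite) new component,
   to another robust vertex. *)

Definition finite {V : Type} (P : V -> Prop) : Prop :=
  exists l : list V, forall z, P z -> In z l.

Definition remove_edge {V : Type} (K : V -> V -> Prop) (e : V * V) (a b : V)
  : Prop := K a b /\ (a, b) <> e /\ (b, a) <> e.

Definition bridge {V : Type} (K : V -> V -> Prop) (e : V * V) : Prop :=
  K (fst e) (snd e) /\ ~ reach (remove_edge K e) (fst e) (snd e).

Definition finitely_many_bridges {V : Type} (K : V -> V -> Prop) : Prop :=
  exists B, forall e, bridge K e -> In e B.

Definition robust {V : Type} (K : V -> V -> Prop) (v : V) : Prop :=
  forall e, ~ finite (reach (remove_edge K e) v).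

Section FinitePredicates.

Variable V : Type.

Lemma finite_incl (P Q : V -> Prop) :
  (forall z, P z -> Q z) -> finite Q -> finite P.
Proof. intros HPQ [l Hl]; exists l; auto. Qed.

Lemma finite_union (P Q : V -> Prop) :
  finite P -> finite Q -> finite (fun z => P z \/ Q z).
Proof.
  intros [l Hl] [m Hm]; exists (l ++ m); intros z [Hz|Hz]; apply in_app_iff; auto.
Qed.

Lemma finite_big_union (I : Type) (P : I -> V -> Prop) (l : list I) :
  (forall i, In i l -> finite (P i)) -> finite (fun z => exists i, In i l /\ P i z).
Proof.
  induction l as [|i l IH]; intros Hfin.
  - exists []; intros z (j & [] & _).
  - apply (finite_incl _ (fun z => P i z \/ exists j, In j l /\ P j z)).
    + intros z (j & [<-|Hj] & Hz); eauto.
    + apply finite_union; [apply Hfin; left; reflexivity|].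
      apply IH; intros j Hj; apply Hfin; right; exact Hj.
Qed.

Lemma finite_guard (P : V -> Prop) : finite (fun z => finite P /\ P z).
Proof.
  destruct (classic (finite P)) as [[l Hl]|Hn].
  - exists l; intros z [_ Hz]; auto.
  - exists []; intros z [Hf _]; contradiction.
Qed.

Lemma infinite_avoid (P Q : V -> Prop) (l : list V) :
  ~ finite P -> finite Q -> exists z, P z /\ ~ Q z /\ ~ In z l.
Proof.
  intros HP [m Hm]; apply NNPP; intro Hn; apply HP; exists (m ++ l).
  intros z Hz; apply in_app_iff.
  destruct (classic (Q z)); [left; auto|].
  destruct (classic (In z l)); [right; auto|].
  exfalso; eauto.
Qed.

End FinitePredicates.

Section Reachability.

Variable V : Type.
Implicit Types K R : V -> V -> Prop.

Lemma reach_mono K R :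
  (forall a b, K a b -> R a b) -> forall a b, reach K a b -> reach R a b.
Proof.
  intros HKR a b H; induction H.
  - apply rt_step; auto.
  - apply rt_refl.
  - eapply rt_trans; eauto.
Qed.

Lemma reach_sym K : symmetric V K -> symmetric V (reach K).
Proof.
  intros Hs a b H; induction H.
  - apply rt_step; auto.
  - apply rt_refl.
  - eapply rt_trans; eauto.
Qed.

Lemma reach_support K x y :
  reach K x y -> exists E, reach (fun a b => K a b /\ In (a, b) E) x y.
Proof.
  intro H; induction H as [x y Hxy|x|x y z _ [E1 H1] _ [E2 H2]].
  - exists [(x, y)]; apply rt_step; split; [exact Hxy | left; reflexivity].
  - exists []; apply rt_refl.
  - exists (E1 ++ E2).
    eapply rt_trans; [eapply reach_mono; [|exact H1] | eapply reach_mono; [|exact H2]];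
      intros a b [Hab Hin]; split; auto; apply in_or_app; auto.
Qed.

Lemma reach_neq_clos_trans K v w : reach K v w -> v <> w -> clos_trans V K v w.
Proof.
  intros H Hne; apply clos_rt_rtn1 in H; destruct H as [|y w Hyw Hvy].
  - contradiction.
  - apply (clos_rt_t _ _ v y w); [apply clos_rtn1_rt; exact Hvy | apply t_step; exact Hyw].
Qed.

Lemma clos_trans_out_edge K v w : clos_trans V K v w -> exists y, K v y.
Proof. intro H; apply clos_trans_t1n in H; destruct H; eauto. Qed.

Lemma infinite_reach_out_edge K v : ~ finite (reach K v) -> exists y, K v y.
Proof.
  intro Hinf; destruct (infinite_avoid _ _ (fun _ => False) [v] Hinf) as (z & Hz & _ & Hnz).
  - exists []; intros _ [].
  - apply (clos_trans_out_edge _ _ z), reach_neq_clos_trans; [exact Hz|].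
    intros ->; apply Hnz; left; reflexivity.
Qed.

End Reachability.

Section EdgeRemoval.

Variable V : Type.
Implicit Types K : V -> V -> Prop.

Lemma remove_edge_sym K e : symmetric V K -> symmetric V (remove_edge K e).
Proof. intros Hs a b (Hab & H1 & H2); repeat split; auto. Qed.

Lemma remove_edge_comm K e f :
  remove_edge (remove_edge K e) f = remove_edge (remove_edge K f) e.
Proof.
  apply functional_extensionality; intro a; apply functional_extensionality; intro b.
  apply propositional_extensionality; unfold remove_edge; tauto.
Qed.

Lemma reach_remove_edge K x y s t :
  symmetric V K -> reach K s t ->
  let R := remove_edge K (x, y) in
  reach R s t \/ (reach R s x /\ reach R y t) \/ (reach R s y /\ reach R x t).
Proof.
  intros Hs Hst R.
  apply clos_rt_rtn1 in Hst.
  induction Hst as [|b c Hbc _ IH]; [left; apply rt_refl|].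
  destruct (classic ((b, c) = (x, y))) as [E|Ebc]; [injection E as -> ->|].
  { destruct IH as [A | [[A _] | [A _]]].
    - right; left; split; [exact A | apply rt_refl].
    - right; left; split; [exact A | apply rt_refl].
    - left; exact A. }
  destruct (classic ((c, b) = (x, y))) as [E|Ecb]; [injection E as -> ->|].
  { destruct IH as [A | [[A _] | [A _]]].
    - right; right; split; [exact A | apply rt_refl].
    - left; exact A.
    - right; right; split; [exact A | apply rt_refl]. }
  assert (Rbc : reach R b c) by (apply rt_step; repeat split; auto).
  destruct IH as [A | [[A B] | [A B]]].
  - left; eapply rt_trans; eauto.
  - right; left; split; [exact A | eapply rt_trans; eauto].
  - right; right; split; [exact A | eapply rt_trans; eauto].
Qed.

Lemma reach_remove_non_bridge K e s t :
  symmetric V K -> ~ bridge K e -> reach K s t -> reach (remove_edge K e) s t.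
Proof.
  destruct e as [p q]; intros Hs Hnb Hst; unfold bridge in Hnb; simpl in Hnb.
  destruct (classic (K p q)) as [Hpq|Hpq].
  - assert (Rpq : reach (remove_edge K (p, q)) p q) by (apply NNPP; tauto).
    assert (RS := reach_sym _ _ (remove_edge_sym _ (p, q) Hs)).
    destruct (reach_remove_edge _ p q s t Hs Hst) as [A | [[A B] | [A B]]].
    + exact A.
    + eapply rt_trans; [exact A|]; eapply rt_trans; [exact Rpq | exact B].
    + eapply rt_trans; [exact A|]; eapply rt_trans; [apply RS, Rpq | exact B].
  - apply (reach_mono _ K); [|exact Hst].
    intros a b Hab; repeat split; [exact Hab | |]; intro E; injection E as -> ->;
      auto.
Qed.

Lemma finitely_many_bridges_remove_edge K e :
  symmetric V K -> finitely_many_bridges K -> finitely_many_bridges (remove_edge K e).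
Proof.
  destruct e as [x y]; intros Hs [B HB].
  set (K' := remove_edge K (x, y)).
  assert (S' : symmetric V (reach K')) by apply reach_sym, remove_edge_sym, Hs.
  assert (HE : exists E, reach K' x y -> reach (fun a b => K' a b /\ In (a, b) E) x y).
  { destruct (classic (reach K' x y)) as [Hxy|Hxy].
    - destruct (reach_support _ _ _ _ Hxy) as [E HE]; exists E; auto.
    - exists []; tauto. }
  destruct HE as [E HE].
  exists (B ++ E ++ map (fun a => (snd a, fst a)) E).
  intros [p q] [Hpq Hbr]; simpl in Hpq, Hbr.
  destruct (classic (bridge K (p, q))) as [Hb|Hnb]; [apply in_app_iff; auto|].
  set (K'' := remove_edge K' (p, q)) in Hbr.
  assert (S'' : symmetric V (reach K'')) by apply reach_sym, remove_edge_sym, remove_edge_sym, Hs.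
  assert (Hpq0 : reach (remove_edge K (p, q)) p q).
  { apply NNPP; intro Hn; apply Hnb; split; [exact (proj1 Hpq) | exact Hn]. }
  pose proof (reach_remove_edge _ x y p q (remove_edge_sym _ _ Hs) Hpq0) as Hsplit.
  cbv zeta in Hsplit; rewrite remove_edge_comm in Hsplit; fold K' K'' in Hsplit.
  destruct Hsplit as [A | Hvia]; [contradiction|].
  assert (K''K' : forall a b, K'' a b -> K' a b) by (intros a b Hab; exact (proj1 Hab)).
  assert (Hxy : reach K' x y).
  { assert (Rpq : reach K' p q) by (apply rt_step; exact Hpq).
    destruct Hvia as [[A C]|[A C]]; apply (reach_mono _ _ _ K''K') in A, C.
    - apply S' in A; apply S' in C; eapply rt_trans; [exact A|eapply rt_trans; eauto].
    - apply S' in Rpq; eapply rt_trans; [exact C|eapply rt_trans; eauto]. }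
  assert (HinE : In (p, q) E \/ In (q, p) E).
  { apply NNPP; intro Hn; apply Hbr.
    assert (Hxy'' : reach K'' x y).
    { eapply reach_mono; [|exact (HE Hxy)].
      intros a b [Hab Hin]; split; [exact Hab|split]; intro Heq;
        injection Heq as -> ->; tauto. }
    destruct Hvia as [[A C]|[A C]].
    - eapply rt_trans; [exact A|eapply rt_trans; eauto].
    - apply S'' in Hxy''; eapply rt_trans; [exact A|eapply rt_trans; eauto]. }
  rewrite !in_app_iff, in_map_iff; destruct HinE as [H|H]; [tauto|].
  right; right; exists (q, p); auto.
Qed.

End EdgeRemoval.

Section RobustVertices.

Variables (V : Type) (K : V -> V -> Prop).
Hypotheses (Hs : symmetric V K) (Hbridges : finitely_many_bridges K).

Lemma fragile_finite : finite (fun u => ~ finite (reach K u) /\ ~ robust K u).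
Proof.
  destruct Hbridges as [B HB].
  apply (finite_incl _ _ (fun u => exists e, In e B /\
    ((finite (reach (remove_edge K e) (fst e)) /\ reach (remove_edge K e) (fst e) u) \/
     (finite (reach (remove_edge K e) (snd e)) /\ reach (remove_edge K e) (snd e) u)))).
  2: { apply finite_big_union; intros e _; apply finite_union; apply finite_guard. }
  intros u [Hinf Hnr].
  apply not_all_ex_not in Hnr as [[p q] Hfin]; apply NNPP in Hfin.
  set (R := remove_edge K (p, q)) in Hfin.
  assert (SR : symmetric V (reach R)) by apply reach_sym, remove_edge_sym, Hs.
  assert (Hb : bridge K (p, q)).
  { apply NNPP; intro Hnb; apply Hinf; eapply finite_incl; [|exact Hfin].
    intro z; apply reach_remove_non_bridge; auto. }
  exists (p, q); split; [apply HB, Hb|]; simpl.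
  assert (Hend : reach R u p \/ reach R u q).
  { destruct (infinite_avoid _ _ _ [] Hinf Hfin) as (z & Hz & Hnz & _).
    destruct (reach_remove_edge _ _ p q u z Hs Hz) as [A | [[A _] | [A _]]];
      [contradiction | left | right]; exact A. }
  assert (Hcomp : forall x, reach R u x -> finite (reach R x) /\ reach R x u).
  { intros x Hx; split; [|apply SR, Hx].
    eapply finite_incl; [|exact Hfin]; intros z Hz; eapply rt_trans; eauto. }
  destruct Hend as [H|H]; apply Hcomp in H; auto.
Qed.

Lemma robust_in_infinite_component v l :
  ~ finite (reach K v) -> exists w, reach K v w /\ robust K w /\ ~ In w l.
Proof.
  intro Hinf.
  destruct (infinite_avoid _ _ _ l Hinf fragile_finite) as (w & Hw & Hnf & Hnl).
  exists w; repeat split; auto.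
  apply NNPP; intro Hnr; apply Hnf; split; [|exact Hnr].
  intros [m Hm]; apply Hinf; exists m; intros z Hz; apply Hm.
  eapply rt_trans; [apply reach_sym; eauto | exact Hz].
Qed.

End RobustVertices.

Section CatHerding.

Variables (V : Type) (adj : V -> V -> Prop).
Hypotheses (Hsg : simple_graph adj) (Htec : two_edge_connected adj).

Lemma del_adj_nil : del_adj adj [] = adj.
Proof.
  apply functional_extensionality; intro a; apply functional_extensionality; intro b.
  apply propositional_extensionality; unfold del_adj; simpl; tauto.
Qed.

Lemma del_adj_cons e D : del_adj adj (e :: D) = remove_edge (del_adj adj D) e.
Proof.
  apply functional_extensionality; intro a; apply functional_extensionality; intro b.
  apply propositional_extensionality; unfold del_adj, remove_edge; simpl.
  split; [intros (H1 & H2 & H3) | intros ((H1 & H2 & H3) & H4 & H5)];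
    repeat split; auto; intuition (subst; auto).
Qed.

Lemma del_adj_snoc D e : del_adj adj (D ++ [e]) = remove_edge (del_adj adj D) e.
Proof.
  apply functional_extensionality; intro a; apply functional_extensionality; intro b.
  apply propositional_extensionality; unfold del_adj, remove_edge.
  rewrite !in_app_iff; simpl.
  split; [intros (H1 & H2 & H3) | intros ((H1 & H2 & H3) & H4 & H5)];
    repeat split; auto; intuition (subst; auto).
Qed.

Lemma del_adj_sym D : symmetric V (del_adj adj D).
Proof. intros a b (Hab & H1 & H2); repeat split; auto; apply (proj1 Hsg), Hab. Qed.

Lemma finitely_many_bridges_del_adj D : finitely_many_bridges (del_adj adj D).
Proof.
  induction D as [|e D IH].
  - exists []; intros [p q] [Hpq Hn]; exfalso; apply Hn; simpl in *.
    rewrite del_adj_nil in *; apply (proj2 Htec) in Hpq.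
    rewrite del_adj_cons, del_adj_nil in Hpq; apply Hpq.
  - rewrite del_adj_cons; apply finitely_many_bridges_remove_edge; auto using del_adj_sym.
Qed.

Lemma robust_start : infinite_type V -> exists v, robust (del_adj adj []) v.
Proof.
  intro Hinf.
  assert (Hall : ~ finite (fun _ : V => True)).
  { intros [l Hl]; apply Hinf; exists l; auto. }
  destruct (infinite_avoid _ _ (fun _ => False) [] Hall) as (x & _ & _ & _);
    [exists []; tauto|].
  destruct (robust_in_infinite_component _ _ (del_adj_sym [])
              (finitely_many_bridges_del_adj []) x []) as (v & _ & Hv & _).
  - rewrite del_adj_nil; intro Hfin; apply Hall; eapply finite_incl; [|exact Hfin].
    intros z _; apply (proj1 Htec).
  - exists v; exact Hv.
Qed.

Lemma robust_step D e v : robust (del_adj adj D) v ->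
  exists w, w <> v /\ reach (del_adj adj (D ++ [e])) v w /\
            robust (del_adj adj (D ++ [e])) w.
Proof.
  intro Hv; rewrite del_adj_snoc.
  destruct (robust_in_infinite_component _ _
              (remove_edge_sym _ _ e (del_adj_sym D))
              (finitely_many_bridges_remove_edge _ _ e (del_adj_sym D)
                 (finitely_many_bridges_del_adj D))
              v [v] (Hv e)) as (w & Hw & Hr & Hnv).
  exists w; repeat split; auto.
  intros ->; apply Hnv; left; reflexivity.
Qed.

Definition cat_step (D : list (V * V)) (e : V * V) (v : V) : V :=
  epsilon (inhabits v) (fun w => w <> v /\ reach (del_adj adj (D ++ [e])) v w /\
                                 robust (del_adj adj (D ++ [e])) w).

Lemma cat_step_spec D e v : robust (del_adj adj D) v ->
  let w := cat_step D e v in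
  w <> v /\ reach (del_adj adj (D ++ [e])) v w /\ robust (del_adj adj (D ++ [e])) w.
Proof. intros Hv w; subst w; unfold cat_step; apply epsilon_spec, robust_step, Hv. Qed.

(* The history is kept most recent deletion first. *)
Fixpoint run_rev (v0 : V) (r : list (V * V)) : V :=
  match r with
  | [] => v0
  | e :: r' => cat_step (rev r') e (run_rev v0 r')
  end.

Definition robust_strategy (v0 : V) : cat_strategy V :=
  {| cat_start := v0; cat_move := fun D => run_rev v0 (rev D) |}.

Lemma cat_pos_robust_strategy v0 D :
  cat_pos (robust_strategy v0) D = run_rev v0 (rev D).
Proof. destruct D; reflexivity. Qed.

Lemma cat_pos_snoc v0 D e :
  cat_pos (robust_strategy v0) (D ++ [e]) = cat_step D e (cat_pos (robust_strategy v0) D).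
Proof.
  rewrite !cat_pos_robust_strategy, rev_unit; simpl; rewrite rev_involutive; reflexivity.
Qed.

Lemma cat_pos_robust v0 : robust (del_adj adj []) v0 ->
  forall D, robust (del_adj adj D) (cat_pos (robust_strategy v0) D).
Proof.
  intros H0 D; induction D as [|e D IH] using rev_ind; [exact H0|].
  rewrite cat_pos_snoc; apply cat_step_spec, IH.
Qed.

End CatHerding.

Theorem mainTheorem13 (V : Type) (adj : V -> V -> Prop) :
  simple_graph adj -> infinite_type V -> two_edge_connected adj ->
  cat_win adj.
Proof.
  intros Hsg Hinf Htec.
  destruct (robust_start _ _ Hsg Htec Hinf) as [v0 Hv0].
  exists (robust_strategy V adj v0); split.
  - destruct (infinite_reach_out_edge _ _ _ (Hv0 (v0, v0))) as [y [[Hy _] _]].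
    intro Hiso; exact (Hiso y Hy).
  - intros D a b _ _ D'; subst D'; rewrite cat_pos_snoc.
    destruct (cat_step_spec _ _ Hsg Htec D (a, b) _ (cat_pos_robust _ _ Hsg Htec _ Hv0 D))
      as (Hne & Hr & _).
    assert (Ht := reach_neq_clos_trans _ _ _ _ Hr (fun E => Hne (eq_sym E))).
    split; [|split; [exact Hne | exact Ht]].
    intro Hiso; destruct (clos_trans_out_edge _ _ _ _ Ht) as [y Hy]; exact (Hiso y Hy).
Qed.
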